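(* Let $b,c\ge 0$ and consider the system $$\dot x=x(1-y+cx),\qquad \dot y=y(-1+x),\qquad \dot z=-bz.$$ Let $f\in\mathbb{C}[x,y,z]$ be an irreducible Darboux polynomial of degree greater than one with cofactor $k=\alpha_0+\alpha_1x+\alpha_2y+\alpha_3z$, $\alpha_i\in\mathbb{C}$. Then $\alpha_0=\alpha_1=\alpha_2=\alpha_3=0$.
   Context: A Darboux polynomial of the vector field $x(1-y+cx)\partial_x+y(-1+x)\partial_y-bz\partial_z$ is a polynomial $f$ with $x(1-y+cx)f_x+y(-1+x)f_y-bzf_z=kf$ for a polynomial cofactor $k$ (here of degree at most one). *)

From HB Require Import structures.
From mathcomp Require Import all_boot all_order all_algebra.
From mathcomp Require Import Rstruct.
From mathcomp Require Import complex.
From mathcomp Require Import mpoly.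
Set Implicit Arguments. Unset Strict Implicit. Unset Printing Implicit Defensive.
Import GRing.Theory Num.Theory.
Local Open Scope ring_scope.

Notation RR := Rdefinitions.R.
Definition CC : Type := complex RR.

Definition ix : 'I_3 := @Ordinal 3 0 isT.
Definition iy : 'I_3 := @Ordinal 3 1 isT.
Definition iz : 'I_3 := @Ordinal 3 2 isT.
Definition polX : {mpoly CC[3]} := 'X_ix.
Definition polY : {mpoly CC[3]} := 'X_iy.
Definition polZ : {mpoly CC[3]} := 'X_iz.

Definition rC (r : RR) : {mpoly CC[3]} := (real_complex RR r : CC)%:MP.

Definition Xfield (b c : RR) (f : {mpoly CC[3]}) : {mpoly CC[3]} :=
  polX * (1 - polY + rC c * polX) * f^`M(ix)
  + polY * (-1 + polX) * f^`M(iy)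
  - rC b * polZ * f^`M(iz).

Definition darboux (b c : RR) (f k : {mpoly CC[3]}) : Prop :=
  Xfield b c f = k * f.

Definition mirreducible (f : {mpoly CC[3]}) : Prop :=
  f != 0 /\ f \isn't a GRing.unit /\
  forall g h : {mpoly CC[3]}, f = g * h ->
    g \is a GRing.unit \/ h \is a GRing.unit.

Definition tdeg (f : {mpoly CC[3]}) : nat := (msize f).-1.

From HB Require Import structures.
From mathcomp Require Import all_boot all_order all_algebra.
From mathcomp Require Import Rstruct.
From mathcomp Require Import complex.
From mathcomp Require Import mpoly.
From mathcomp Require Import ring zify.
Set Implicit Arguments. Unset Strict Implicit. Unset Printing Implicit Defensive.
Import GRing.Theory Num.Theory.
Local Open Scope ring_scope.

(* Comparing the coefficients of x^i y^j z^l on both sides of the Darboux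
   equation gives a linear recurrence between the coefficient C i j l of f and
   its neighbours C (i-1) j l, C i (j-1) l, C i j (l-1).  Evaluated just
   outside the support of f it kills all but one term: at the top z-degree
   this forces a3 = 0, and at the top y-degree among the monomials free of x
   (which exist since x does not divide the irreducible f) it forces a2 = 0.
   Then every nonzero z-slice of f is a single monomial y^n z^l, with a1 = n
   and a0 + b l = -n.  Since y does not divide f some slice has n = 0, so
   a1 = 0; since z does not divide f the slice l = 0 is nonzero, so a0 = 0. *)

Section MPolyVarCoef.
Context (n : nat) (R : comNzRingType).
Implicit Types (p : {mpoly R[n]}) (m : 'X_{1..n}) (k : 'I_n).

Lemma lepm1 m k : (0 < m k)%N -> (U_(k) <= m)%MM.
Proof. by move=> mk; apply/mnm_lepP => i; rewrite mnm1E; case: eqP => [<-|]. Qed.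

Lemma mcoeff_mulX p k m :
  (p * 'X_k)@_m = if (0 < m k)%N then p@_(m - U_(k)) else 0.
Proof.
case: ifP => [/lepm1 Ukm | mk0].
  by rewrite -{1}(submK Ukm) addmC mcoeffMX.
rewrite mcoeffM big1 // => -[m1 m2] /= /eqP mE.
rewrite mcoeffX; case: eqP => [Um2|]; last by rewrite mulr0.
suff : (0 < m k)%N by rewrite mk0.
by rewrite mE mnmDE -Um2 mnm1E eqxx addn1.
Qed.

Lemma mcoeff_mderivMX p k m : (p^`M(k) * 'X_k)@_m = p@_m *+ m k.
Proof.
rewrite mcoeff_mulX; case: ifPn => [mk | ]; last by rewrite -eqn0Ngt => /eqP ->.
by rewrite mcoeff_mderiv submK ?lepm1 // mnmBE mnm1E eqxx subn1 prednK.
Qed.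

Lemma mulX_of_msupp_gt0 p k : (forall m, m \in msupp p -> (0 < m k)%N) ->
  exists g, p = 'X_k * g.
Proof.
move=> supp_k; exists (\sum_(m <- msupp p) p@_m *: 'X_[m - U_(k)]).
rewrite {1}(mpolyE p) mulr_sumr; apply: eq_big_seq => m /supp_k mk.
by rewrite -scalerAr -mpolyXD addmC submK // lepm1.
Qed.

End MPolyVarCoef.

Lemma msize_unit (n : nat) (R : idomainType) (p : {mpoly R[n]}) :
  p \is a GRing.unit -> msize p = 1%N.
Proof.
case/andP => /eqP pE u0; rewrite pE msizeC; case: eqP u0 => // ->.
by rewrite unitr0.
Qed.

Lemma mirreducible_mnm_eq0 (f : {mpoly CC[3]}) (k : 'I_3) :
  mirreducible f -> (1 < tdeg f)%N -> exists2 m, m \in msupp f & m k = 0%N.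
Proof.
move=> [_ [_ irr]] deg.
have [/hasP[m mf /eqP] | /hasPn supp_k] :=
  boolP (has (fun m : 'X_{1..3} => m k == 0%N) (msupp f)); first by exists m.
have {}supp_k m : m \in msupp f -> (0 < m k)%N by rewrite lt0n => /supp_k.
have [g fE] := mulX_of_msupp_gt0 supp_k.
have msizeXk : msize ('X_k : {mpoly CC[3]}) = 2%N by rewrite msizeX mdeg1.
have [] := irr _ _ fE => /msize_unit msize1; first by rewrite msizeXk in msize1.
have g0 : g != 0 by rewrite -msize_poly_eq0 msize1.
have Xk0 : 'X_k != 0 :> {mpoly CC[3]} by rewrite -msize_poly_eq0 msizeXk.
by move: deg; rewrite /tdeg fE msizeM // msizeXk msize1.
Qed.

Definition mon (i j l : nat) : 'X_{1..3} := [multinom nth 0%N [:: i; j; l] k | k < 3].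

Lemma monE (m : 'X_{1..3}) : m = mon (m ix) (m iy) (m iz).
Proof.
by apply/mnmP => -[[|[|[|k]]] lt_k3] //=; rewrite mnmE; congr (m _); apply: val_inj.
Qed.

Lemma mdeg_mon i j l : mdeg (mon i j l) = (i + j + l)%N.
Proof. by rewrite mdegE !big_ord_recr big_ord0 /= !mnmE. Qed.

Lemma monB_ix i j l : (mon i j l - U_(ix))%MM = mon i.-1 j l.
Proof.
by apply/mnmP => -[[|[|[|k]]] ?] //; rewrite mnmBE mnm1E !mnmE /= ?subn0 ?subn1.
Qed.

Lemma monB_iy i j l : (mon i j l - U_(iy))%MM = mon i j.-1 l.
Proof.
by apply/mnmP => -[[|[|[|k]]] ?] //; rewrite mnmBE mnm1E !mnmE /= ?subn0 ?subn1.
Qed.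

Lemma monB_iz i j l : (mon i j l - U_(iz))%MM = mon i j l.-1.
Proof.
by apply/mnmP => -[[|[|[|k]]] ?] //; rewrite mnmBE mnm1E !mnmE /= ?subn0 ?subn1.
Qed.


Definition darboux_rec (b c a0 a1 a2 a3 : CC) (C : nat -> nat -> nat -> CC) :=
  forall i j l,
  C i j l * (i%:R - j%:R - b * l%:R - a0)
  + (if (0 < i)%N then C i.-1 j l * (c * i.-1%:R + j%:R - a1) else 0)
  - (if (0 < j)%N then C i j.-1 l * (i%:R + a2) else 0)
  - (if (0 < l)%N then a3 * C i j l.-1 else 0) = 0.

Lemma darboux_coef_rec (b c : RR) f (a0 a1 a2 a3 : CC) :
  darboux b c f (a0%:MP + a1%:MP * polX + a2%:MP * polY + a3%:MP * polZ) ->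
  darboux_rec (real_complex RR b) (real_complex RR c) a0 a1 a2 a3
    (fun i j l => f@_(mon i j l)).
Proof.
rewrite /darboux /Xfield /rC /polX /polY /polZ => E i j l; move: E.
set fx := f^`M(ix); set fy := f^`M(iy); set fz := f^`M(iz).
set X := 'X_ix; set Y := 'X_iy; set Z := 'X_iz.
set bb := real_complex RR b; set cc := real_complex RR c => E.
have {}E : fx * X + cc%:MP * (fx * X * X) - fx * X * Y + fy * Y * X - fy * Y
            - bb%:MP * (fz * Z)
          = a0%:MP * f + a1%:MP * (f * X) + a2%:MP * (f * Y) + a3%:MP * (f * Z).
  by apply: etrans (etrans E _); ring.
move/(congr1 (mcoeff (mon i j l))): E.
rewrite !(mcoeffD, mcoeffB, mcoeffN, mcoeffCM) /X /Y /Z /fx /fy /fz !mcoeff_mderivMX.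
rewrite !(mcoeff_mulX (_ * _)) !mcoeff_mderivMX !mcoeff_mulX.
rewrite monB_ix monB_iy monB_iz !mnmE /= => /eqP; rewrite -subr_eq0 => /eqP E.
rewrite -[RHS]E; by case: (0 < i)%N; case: (0 < j)%N; case: (0 < l)%N; ring.
Qed.

Section DarbouxRecurrence.
Variables (N : nat) (C : nat -> nat -> nat -> CC) (b c a0 a1 a2 a3 : CC).
Hypothesis C_bounded : forall i j l, C i j l != 0 -> (i + j + l < N)%N.
Hypothesis C_rec : darboux_rec b c a0 a1 a2 a3 C.

Definition row_nz j l := [exists i : 'I_N, C i j l != 0].
Definition slice_nz l := [exists j : 'I_N, row_nz j l].

Lemma row_nzP j l : reflect (exists i, C i j l != 0) (row_nz j l).
Proof.
apply: (iffP existsP) => [[i Ci] | [i Ci]]; first by exists i.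
have ltiN : (i < N)%N by have := C_bounded Ci; lia.
by exists (Ordinal ltiN).
Qed.

Lemma slice_nzP l : reflect (exists i j, C i j l != 0) (slice_nz l).
Proof.
apply: (iffP existsP) => [[j /row_nzP [i Ci]] | [i [j Cij]]]; first by exists i, j.
have ltjN : (j < N)%N by have := C_bounded Cij; lia.
by exists (Ordinal ltjN); apply/row_nzP; exists i.
Qed.

Lemma darboux_rec_a3_eq0 i j l : C i j l != 0 -> a3 = 0.
Proof.
move=> Cijl; have exL : exists l, slice_nz l by exists l; apply/slice_nzP; exists i, j.
have [|L /slice_nzP [i' [j' CL]] maxL] := @ex_maxnP _ N exL.
  by move=> l' /slice_nzP [? [? /C_bounded]]; lia.
have above i1 j1 : C i1 j1 L.+1 = 0.
  apply/eqP; apply: contraT => C1; suff /maxL : slice_nz L.+1 by rewrite ltnn.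
  by apply/slice_nzP; exists i1, j1.
have := C_rec i' j' L.+1.
rewrite !above /= !mul0r !if_same !(add0r, sub0r, oppr0).
by move/eqP; rewrite oppr_eq0 mulf_eq0 (negbTE CL) orbF => /eqP.
Qed.

Lemma darboux_rec_a2_eq0 j l : a3 = 0 -> C 0 j l != 0 -> a2 = 0.
Proof.
move=> a3_0 C0jl; have exJ : exists j, C 0 j l != 0 by exists j.
have [|J C0J maxJ] := @ex_maxnP _ N exJ; first by move=> j' /C_bounded; lia.
have above : C 0 J.+1 l = 0.
  by apply/eqP; apply: contraT => /maxJ; rewrite ltnn.
have := C_rec 0 J.+1 l.
rewrite above a3_0 /= !mul0r !if_same !(add0r, subr0, sub0r).
by move/eqP; rewrite oppr_eq0 mulf_eq0 (negbTE C0J) => /eqP.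
Qed.

Section Slice.
Hypotheses (a3_0 : a3 = 0) (a2_0 : a2 = 0).
Variable l : nat.

Lemma slice_top i j : C i j l != 0 ->
  exists J, [/\ a0 + b * l%:R = - J%:R, forall i j, C i j l != 0 -> (j <= J)%N
              & forall i, C i J l != 0 -> i = 0%N].
Proof.
move=> Cij; have exJ : exists j, row_nz j l by exists j; apply/row_nzP; exists i.
have [|J /row_nzP [i' CJ] maxJ] := @ex_maxnP _ N exJ.
  by move=> j' /row_nzP [? /C_bounded]; lia.
have above i1 : C i1 J.+1 l = 0.
  apply/eqP; apply: contraT => C1; suff /maxJ : row_nz J.+1 l by rewrite ltnn.
  by apply/row_nzP; exists i1.
have top_row i1 : C i1 J l != 0 -> i1 = 0%N.
  move=> C1; have := C_rec i1 J.+1 l.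
  rewrite !above a3_0 a2_0 /= !mul0r !if_same.
  rewrite !(add0r, sub0r, subr0) => /eqP; rewrite oppr_eq0 mulf_eq0 (negbTE C1).
  by rewrite /= addr0 pnatr_eq0 => /eqP.
have {}CJ : C 0 J l != 0 by rewrite -(top_row _ CJ).
exists J; split => //; last by move=> i1 j1 C1; apply: maxJ; apply/row_nzP; exists i1.
have := C_rec 0 J l; rewrite a2_0 a3_0 /= !addr0 mulr0 mul0r !if_same !subr0.
move/eqP; rewrite mulf_eq0 (negbTE CJ) /= => /eqP row_eq.
by apply/eqP; rewrite -subr_eq0 -oppr_eq0; apply/eqP; rewrite -[RHS]row_eq; ring.
Qed.

Lemma slice_bottom i j : C i j l != 0 ->
  exists i1 j1, [/\ C i1 j1 l != 0, i1%:R - j1%:R - b * l%:R - a0 = 0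
                  & forall i j, C i j l != 0 -> (j1 <= j)%N].
Proof.
move=> Cij; have exj : exists j, row_nz j l by exists j; apply/row_nzP; exists i.
have [j1 /row_nzP exi minj] := ex_minnP exj.
have [i1 C1 mini] := ex_minnP exi.
have minj' i' j' : C i' j' l != 0 -> (j1 <= j')%N.
  by move=> C'; apply: minj; apply/row_nzP; exists i'.
exists i1, j1; split => //.
have left : (0 < i1)%N -> C i1.-1 j1 l = 0.
  move=> i1_gt0; apply/eqP; apply: contraT => /mini.
  by rewrite leqNgt ltn_predL i1_gt0.
have below : (0 < j1)%N -> C i1 j1.-1 l = 0.
  move=> j1_gt0; apply/eqP; apply: contraT => /minj'.
  by rewrite leqNgt ltn_predL j1_gt0.
have := C_rec i1 j1 l; rewrite a3_0 mul0r if_same subr0.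
case: ifP => [/left -> | _]; case: ifP => [/below -> | _]; rewrite ?mul0r ?addr0 ?subr0;
  by move/eqP; rewrite mulf_eq0 (negbTE C1) => /eqP.
Qed.

Lemma slice_monomial i j : C i j l != 0 ->
  exists n, [/\ a0 + b * l%:R = - n%:R, a1 = n%:R
             & forall i j, C i j l != 0 -> i = 0%N /\ j = n].
Proof.
move=> Cij; have [J [top maxJ top_row]] := slice_top Cij.
have [i1 [j1 [C1 bot minj]]] := slice_bottom Cij.
have i1J : (i1 + J)%N = j1.
  apply/eqP; rewrite -(eqr_nat CC) natrD; apply/eqP/subr0_eq.
  by rewrite -[RHS]bot -[J%:R]opprK -top; ring.
have supp i' j' : C i' j' l != 0 -> i' = 0%N /\ j' = J.
  move=> C'; have j'J : j' = J by have := maxJ _ _ C'; have := minj _ _ C'; lia.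
  by rewrite j'J in C' *; rewrite (top_row _ C').
have off_axis i' j' : i' != 0%N -> C i' j' l = 0.
  by move=> i'0; apply/eqP; apply: contraT => /supp [/eqP]; rewrite (negbTE i'0).
exists J; split => //; have CJ : C 0 J l != 0 by have [<- <-] := supp _ _ Cij.
have := C_rec 1 J l; rewrite (off_axis 1%N J) // (off_axis 1%N J.-1) // a3_0 /=.
rewrite !mul0r !if_same add0r !subr0 mulr0 add0r => /eqP.
by rewrite mulf_eq0 (negbTE CJ) => /eqP /subr0_eq.
Qed.

End Slice.

Lemma darboux_rec_cofactor_eq0 :
  (exists j l, C 0 j l != 0) -> (exists i l, C i 0 l != 0) ->
  (exists i j, C i j 0 != 0) -> [/\ a0 = 0, a1 = 0, a2 = 0 & a3 = 0].
Proof.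
move=> [j [l Cx]] [i [l' Cy]] [i' [j' Cz]].
have a3_0 := darboux_rec_a3_eq0 Cz.
have a2_0 := darboux_rec_a2_eq0 a3_0 Cx.
have [n [_ a1n supp]] := slice_monomial a3_0 a2_0 Cy.
have a1_0 : a1 = 0 by have [_ n0] := supp _ _ Cy; rewrite a1n -n0.
have [n' [a0n' a1n' _]] := slice_monomial a3_0 a2_0 Cz.
by split => //; move: a0n'; rewrite mulr0 addr0 -a1n' a1_0 oppr0.
Qed.

End DarbouxRecurrence.

Theorem lemma4p1 (b c : RR) (hb : 0 <= b) (hc : 0 <= c)
    (f : {mpoly CC[3]}) (a0 a1 a2 a3 : CC) :
  mirreducible f -> (1 < tdeg f)%N ->
  darboux b c f (a0%:MP + a1%:MP * polX + a2%:MP * polY + a3%:MP * polZ) ->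
  [/\ a0 = 0, a1 = 0, a2 = 0 & a3 = 0].
Proof.
move=> irr deg_f darboux_f.
have free_of k := mirreducible_mnm_eq0 k irr deg_f.
have rec_f := darboux_coef_rec darboux_f.
apply: (darboux_rec_cofactor_eq0 (N := msize f) _ rec_f) => /=.
- by move=> i j l; rewrite -mcoeff_msupp => /msize_mdeg_lt; rewrite mdeg_mon.
- have [m mf mx] := free_of ix.
  by exists (m iy), (m iz); move: mf; rewrite mcoeff_msupp {1}(monE m) mx.
- have [m mf my] := free_of iy.
  by exists (m ix), (m iz); move: mf; rewrite mcoeff_msupp {1}(monE m) my.
- have [m mf mz] := free_of iz.
  by exists (m ix), (m iy); move: mf; rewrite mcoeff_msupp {1}(monE m) mz.
Qed.
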